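(* Let $N\ge1$ and let $\Phi\in\mathbb R_N^{\otimes 4}$ be a real self-transpose tensor, i.e. with components satisfying $\Phi_{ijkl}=\Phi_{lkji}$ for all $i,j,k,l\in\{1,\dots,N\}$, distributed according to $$\mathcal Z_{\rm ST}(\lambda)=\int\mathcal D\Phi\,e^{-S_{\rm ST}[\Phi](\lambda)},\qquad S_{\rm ST}[\Phi](\lambda)=N\Big(\frac12\sum_{ijkl}\Phi_{ijkl}\Phi_{ijkl}+\frac{\lambda}{2}\sum_{ijkl}\Phi_{ijkl}\Phi_{ikjl}\Big).$$ Then $$\frac{\mathcal Z_{\rm ST}(\lambda)}{\mathcal Z_{\rm ST}(0)}=(1+\lambda)^{-\frac12\left(\frac{N(N+1)}{2}\right)^2}(1-\lambda)^{-\frac12\left(\frac{N(N-1)}{2}\right)^2}.$$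
   Context: $\mathcal D\Phi$ is Lebesgue measure on the real vector space of self-transpose tensors (product of $d\Phi_{ijkl}$ over a set of independent components). *)

From HB Require Import structures.
From mathcomp Require Import all_boot all_order all_algebra.
From mathcomp Require Import all_classical all_reals all_analysis.
Set Implicit Arguments. Unset Strict Implicit. Unset Printing Implicit Defensive.
Import Order.TTheory GRing.Theory Num.Theory.
Local Open Scope ring_scope.

Definition idx (N : nat) : finType := ('I_N * 'I_N * 'I_N * 'I_N)%type.

Definition trq N (t : idx N) : idx N :=
  let: (i, j, k, l) := t in (l, k, j, i).

Definition rep N (t : idx N) : idx N :=
  if (enum_rank t <= enum_rank (trq t))%N then t else trq t.

(* the independent components of a self-transpose tensor *)
Definition reps N : seq (idx N) := [seq t <- enum (idx N) | rep t == t].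

Definition tensor_of (R : realType) N (x : idx N -> R) : idx N -> R :=
  fun t => x (rep t).

Definition self_transpose (R : realType) N (Phi : idx N -> R) : Prop :=
  forall i j k l : 'I_N, Phi (i, j, k, l) = Phi (l, k, j, i).

(* For nonnegative
   integrands this is the integral against the product Lebesgue measure
   (Tonelli), i.e. against  prod_{c in s} dx_c. *)
Fixpoint iter_int (R : realType) (I : eqType) (s : seq I)
    (F : (I -> R) -> \bar R) (x0 : I -> R) : \bar R :=
  match s with
  | [::] => F x0
  | c :: s' =>
      (\int[@lebesgue_measure R]_(y in [set: R])
          iter_int s' F (fun i => if i == c then y else x0 i))%E
  end.

Definition S_ST (R : realType) N (lam : R) (Phi : idx N -> R) : R :=
  N%:R * (2^-1 * (\sum_(i < N) \sum_(j < N) \sum_(k < N) \sum_(l < N)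
                    Phi (i, j, k, l) * Phi (i, j, k, l))
          + lam / 2 * (\sum_(i < N) \sum_(j < N) \sum_(k < N) \sum_(l < N)
                    Phi (i, j, k, l) * Phi (i, k, j, l))).

(* Z_ST(lambda) = int DPhi exp(-S_ST[Phi](lambda)), DPhi = product of dPhi_t
   over the independent components t in reps N *)
Definition Z_ST (R : realType) N (lam : R) : \bar R :=
  iter_int (reps N) (fun x => (expR (- S_ST lam (tensor_of x)))%:E)
    (fun _ => 0).

From HB Require Import structures.
From mathcomp Require Import all_boot all_order all_algebra.
From mathcomp Require Import all_classical all_reals all_analysis.
From mathcomp Require Import measurable_realfun ring lra zify.
Set Implicit Arguments. Unset Strict Implicit. Unset Printing Implicit Defensive.
Import Order.TTheory GRing.Theory Num.Theory.
Local Open Scope ring_scope.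

(* In the independent components x_r (r in reps N) the action reads
   S_ST = N/2 * sum_r w_r (x_r^2 + lam x_r x_(p r)), where w_r in {1, 2} is the
   size of the transposition orbit of r and p is the involution of reps N
   induced by Phi_ijkl |-> Phi_ikjl.  The form is block diagonal: a fixed point
   of p is a 1x1 block 1 + lam, a pair {r, p r} a 2x2 block of determinant
   1 - lam^2.  Integrating one coordinate at a time and completing the square
   gives Z_ST(lam) = Z_ST(0) (1 + lam)^(-F/2) (1 - lam^2)^(-(M - F)/4), where
   M = (N^4 + N^2)/2 is the number of independent components and F = N^3 the
   number of those fixed by p (j = k or i = l). *)

Lemma eq_iter_int (R : realType) (I : eqType) (s : seq I) F G x0 :
  F =1 G -> @iter_int R I s F x0 = iter_int s G x0.
Proof. by move=> /funext ->. Qed.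

Lemma iter_int_rcons (R : realType) (I : eqType) (s : seq I) c F x0 :
  @iter_int R I (rcons s c) F x0 =
  iter_int s (fun x => (\int[@lebesgue_measure R]_(y in [set: R])
                          F (fun i => if i == c then y else x i))%E) x0.
Proof.
elim: s x0 => [|c' s IH] x0 //=.
by apply: eq_integral => y _; exact: IH.
Qed.

Lemma integral_gauss (R : realType) (a m C : R) : 0 < a -> 0 <= C ->
  (\int[@lebesgue_measure R]_(y in [set: R])
     (C * expR (- (a * (y - m) ^+ 2)))%:E)%E = (C * Num.sqrt (pi / a))%:E.
Proof.
move=> a_gt0 C_ge0; have a_ge0 := ltW a_gt0.
set s := Num.sqrt (2 * a)^-1.
have s2 : s ^+ 2 *+ 2 = a^-1.
  rewrite sqr_sqrtr ?invr_ge0 ?mulr_ge0 // -mulr_natr invfM.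
  by rewrite mulrAC mulVf ?mul1r // pnatr_eq0.
have s_neq0 : s != 0.
  by rewrite gt_eqF // sqrtr_gt0 invr_gt0 mulr_gt0.
have peak_gt0 : 0 < normal_peak s by exact: normal_peak_gt0.
transitivity (\int[@lebesgue_measure R]_(y in [set: R])
   ((C / normal_peak s)%:E * (normal_pdf m s y)%:E))%E.
  apply: eq_integral => y _; rewrite -EFinM normal_pdfE //=.
  congr (_%:E); rewrite [RHS]mulrA divfK ?gt_eqF //.
  by rewrite /normal_fun s2 invrK mulNr [_ * a]mulrC.
rewrite ge0_integralZl //; last first.
- by rewrite lee_fin; exact: divr_ge0 C_ge0 (ltW peak_gt0).
- by move=> y _; rewrite lee_fin normal_pdf_ge0.
- by apply/measurable_EFinP; exact: measurable_normal_pdf.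
rewrite integral_normal_pdf mule1 /normal_peak invrK -mulrnAl s2.
by rewrite [a^-1 * _]mulrC; congr (_%:E); exact: mulrC.
Qed.

Lemma sqrtr_div_powR (R : realType) (u a : R) : 0 < a -> 0 <= u ->
  Num.sqrt (u / a) = Num.sqrt u * a `^ (- 2^-1).
Proof.
move=> a_gt0 u_ge0; have a_ge0 := ltW a_gt0.
by rewrite powRN powR12_sqrt // sqrtrM // sqrtrV.
Qed.

Lemma powR_oppD (R : realType) (x a b : R) : 0 < x ->
  x `^ (- (a + b)) = x `^ (- a) * x `^ (- b).
Proof. by move=> x_gt0; rewrite opprD powRD // (gt_eqF x_gt0) implybT. Qed.

Lemma prodr_rcons (R : pzSemiRingType) (I : Type) (s : seq I) c (F : I -> R) :
  \prod_(i <- rcons s c) F i = (\prod_(i <- s) F i) * F c.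
Proof. by rewrite -cats1 big_cat big_seq1. Qed.

Lemma sumr_const_seq (V : nmodType) (I : Type) (s : seq I) (P : pred I) (v : V) :
  \sum_(r <- s | P r) v = v *+ count P s.
Proof.
elim: s => [|r s IH]; first by rewrite big_nil.
by rewrite big_cons IH /=; case: (P r); rewrite ?mulrS.
Qed.

Lemma sumr_seq_pred1 (V : nmodType) (I : eqType) (s : seq I) (a : I) (v : V) :
  uniq s -> \sum_(r <- s) (if r == a then v else 0) = v *+ (a \in s).
Proof. by move=> s_uniq; rewrite -big_mkcond sumr_const_seq count_uniq_mem. Qed.

Section ReducedEnergy.
Variables (R : realType) (I : eqType) (p : I -> I) (w : I -> R) (lam : R).
Hypothesis w_p : forall r, w (p r) = w r.

(* The quadratic form left on the coordinates in s once the coordinates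
   outside s have been integrated out: completing the square in x_(p r) for
   p r outside s leaves (1 - lam^2) x_r^2. *)
Definition reduced_energy (s : seq I) (x : I -> R) : R :=
  \sum_(r <- s) w r * (if p r \in s then x r ^+ 2 + lam * x r * x (p r)
                       else (1 - lam ^+ 2) * x r ^+ 2).

Definition step_coef (s : seq I) (c : I) : R :=
  if p c == c then 1 + lam else if p c \in s then 1 else 1 - lam ^+ 2.

Definition step_shift (s : seq I) (c : I) (x : I -> R) : R :=
  if (p c != c) && (p c \in s) then - (lam * x (p c)) else 0.

Lemma reduced_energy_rcons s c x y :
  uniq (rcons s c) -> {in rcons s c, involutive p} ->
  reduced_energy (rcons s c) (fun i => if i == c then y else x i) =
  reduced_energy s x + w c * step_coef s c * (y - step_shift s c x) ^+ 2.
Proof.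
rewrite rcons_uniq => /andP[c_notin_s s_uniq] p_inv.
have ppc : p (p c) = c by apply: p_inv; rewrite mem_rcons mem_head.
set d := w c * (lam ^+ 2 * x (p c) ^+ 2 + lam * x (p c) * y).
have old_terms : forall r, r \in s ->
  w r * (if p r \in rcons s c
         then (if r == c then y else x r) ^+ 2 +
              lam * (if r == c then y else x r) * (if p r == c then y else x (p r))
         else (1 - lam ^+ 2) * (if r == c then y else x r) ^+ 2) =
  w r * (if p r \in s then x r ^+ 2 + lam * x r * x (p r)
         else (1 - lam ^+ 2) * x r ^+ 2) + (if r == p c then d else 0).
  move=> r r_in_s.
  have ppr : p (p r) = r by apply: p_inv; rewrite mem_rcons in_cons r_in_s orbT.
  have -> : (r == c) = false by apply: contraNF c_notin_s => /eqP <-.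
  rewrite mem_rcons in_cons.
  have [->|r_neq_pc] := eqVneq r (p c).
    by rewrite ppc eqxx (negbTE c_notin_s) w_p /d /=; ring.
  have -> : (p r == c) = false.
    by apply: contraNF r_neq_pc => /eqP <-; rewrite ppr.
  by rewrite addr0.
rewrite /reduced_energy big_rcons /= (eq_big_seq _ old_terms) big_split /=.
rewrite sumr_seq_pred1 // -addrA; congr (_ + _).
rewrite eqxx mem_rcons in_cons /step_coef /step_shift /d.
have [->|_] := eqVneq (p c) c.
  by rewrite (negbTE c_notin_s) /= mulr0n subr0; ring.
by case: (p c \in s); rewrite /= ?mulr0n ?mulr1n ?subr0; ring.
Qed.

Definition fixed_count (s : seq I) : nat := count (fun r => p r == r) s.

(* Each pair {r, p r} with p r != r meeting s contributes 1/2, shared as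
   1/4 + 1/4 when both lie in s. *)
Definition pair_exponent (s : seq I) : R :=
  \sum_(r <- s) (if p r == r then 0 else if p r \in s then 4^-1 else 2^-1).

Lemma pair_exponent_rcons s c :
  uniq (rcons s c) -> {in rcons s c, involutive p} ->
  pair_exponent (rcons s c) =
  pair_exponent s + (if (p c != c) && (p c \notin s) then 2^-1 else 0).
Proof.
rewrite rcons_uniq => /andP[c_notin_s s_uniq] p_inv.
have ppc : p (p c) = c by apply: p_inv; rewrite mem_rcons mem_head.
have old_terms : forall r, r \in s ->
  (if p r == r then 0 else if p r \in rcons s c then 4^-1 else 2^-1) =
  (if p r == r then 0 else if p r \in s then 4^-1 else 2^-1)
  - (if r == p c then 4^-1 else 0) :> R.
  move=> r r_in_s; rewrite mem_rcons in_cons.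
  have ppr : p (p r) = r by apply: p_inv; rewrite mem_rcons in_cons r_in_s orbT.
  have [r_eq_pc|r_neq_pc] := eqVneq r (p c).
    subst r; rewrite ppc eqxx (negbTE c_notin_s).
    have -> : (c == p c) = false by apply: contraNF c_notin_s => /eqP ->.
    by field.
  have -> : (p r == c) = false by apply: contraNF r_neq_pc => /eqP <-; rewrite ppr.
  by rewrite subr0.
rewrite /pair_exponent big_rcons /= (eq_big_seq _ old_terms) sumrB sumr_seq_pred1 //.
rewrite mem_rcons in_cons; have [->|_] := eqVneq (p c) c.
  by rewrite (negbTE c_notin_s) /= mulr0n subr0 !addr0.
by case: (p c \in s); rewrite /= ?mulr0n ?mulr1n ?subr0 ?addr0 ?subrK.
Qed.

Variable kap : R.
Hypothesis kap_gt0 : 0 < kap.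
Hypothesis w_gt0 : forall r, 0 < w r.
Hypothesis lam_bounds : -1 < lam < 1.

Definition gauss_value (s : seq I) : R :=
  (\prod_(c <- s) Num.sqrt (pi / (kap * w c))) *
  ((1 + lam) `^ (- ((fixed_count s)%:R / 2)) * (1 - lam ^+ 2) `^ (- pair_exponent s)).

Lemma step_coef_gt0 s c : 0 < step_coef s c.
Proof.
have [lam_gt lam_lt] := andP lam_bounds.
rewrite /step_coef; case: ifP => _; first lra.
by case: ifP => _; [exact: ltr01 | nra].
Qed.

Lemma gauss_value_rcons s c :
  uniq (rcons s c) -> {in rcons s c, involutive p} ->
  gauss_value (rcons s c) =
  gauss_value s * Num.sqrt (pi / (kap * w c * step_coef s c)).
Proof.
move=> sc_uniq p_inv; have [lam_gt lam_lt] := andP lam_bounds.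
have lamD_gt0 : 0 < 1 + lam by lra.
have kw_gt0 : 0 < kap * w c := mulr_gt0 kap_gt0 (w_gt0 c).
have -> : pi / (kap * w c * step_coef s c) = pi / (kap * w c) / step_coef s c.
  by rewrite invfM mulrA.
rewrite sqrtr_div_powR ?step_coef_gt0 ?divr_ge0 ?pi_ge0 ?(ltW kw_gt0) //.
rewrite /gauss_value pair_exponent_rcons // prodr_rcons.
rewrite /fixed_count -cats1 count_cat [count _ [:: c]]/= addn0 /step_coef.
have [->|_] := eqVneq (p c) c.
  rewrite [~~ true && _]/= addr0 natrD [(_ + _) / 2]mulrDl powR_oppD // mul1r.
  by ring.
case: (p c \in s).
  rewrite [~~ false && _]/= addr0 addn0 powR1.
  by ring.
rewrite [~~ false && _]/= addn0 powR_oppD //; last by nra.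
by ring.
Qed.

Lemma integral_reduced_energy_rcons s c C x :
  uniq (rcons s c) -> {in rcons s c, involutive p} -> 0 <= C ->
  (\int[@lebesgue_measure R]_(y in [set: R]) (C * expR (- (kap *
     reduced_energy (rcons s c) (fun i => if i == c then y else x i))))%:E)%E =
  ((C * Num.sqrt (pi / (kap * w c * step_coef s c))) *
   expR (- (kap * reduced_energy s x)))%:E.
Proof.
move=> sc_uniq p_inv C_ge0.
under eq_integral => y _ do rewrite reduced_energy_rcons //.
transitivity (\int[@lebesgue_measure R]_(y in [set: R])
  ((C * expR (- (kap * reduced_energy s x))) *
   expR (- ((kap * w c * step_coef s c) * (y - step_shift s c x) ^+ 2)))%:E)%E.
  apply: eq_integral => y _; congr (_%:E).
  by rewrite -[RHS]mulrA -expRD; congr (_ * expR _); ring.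
rewrite integral_gauss ?mulr_ge0 ?expR_ge0 //; first by congr (_%:E); ring.
by rewrite !mulr_gt0 ?step_coef_gt0.
Qed.

Lemma iter_int_reduced_energy s C x0 :
  uniq s -> {in s, involutive p} -> 0 <= C ->
  iter_int s (fun x => (C * expR (- (kap * reduced_energy s x)))%:E) x0 =
  (C * gauss_value s)%:E.
Proof.
elim/last_ind: s C x0 => [|s c IH] C x0 sc_uniq p_inv C_ge0.
  rewrite /= /reduced_energy /gauss_value /pair_exponent /fixed_count !big_nil.
  by rewrite /= mulr0 oppr0 expR0 mul0r oppr0 !powRr0 !mulr1.
have s_uniq : uniq s by move: sc_uniq; rewrite rcons_uniq => /andP[].
have p_inv_s : {in s, involutive p}.
  by apply: sub_in1 p_inv => r r_in_s; rewrite mem_rcons in_cons r_in_s orbT.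
rewrite iter_int_rcons.
under eq_iter_int => x do rewrite integral_reduced_energy_rcons //.
rewrite IH ?mulr_ge0 ?sqrtr_ge0 // gauss_value_rcons //.
by congr (_%:E); ring.
Qed.

End ReducedEnergy.

Section SelfTransposeTensor.
Variable N : nat.
Implicit Types t r : idx N.

Definition swap_mid t : idx N := let: (i, j, k, l) := t in (i, k, j, l).
Definition partner r : idx N := rep (swap_mid r).
Definition trq_fixed t : bool := trq t == t.
Definition orbit_size t : nat := (trq t != t).+1.
Definition diag_pair t : bool := let: (i, j, k, l) := t in (j == k) || (i == l).

Lemma trqK : involutive (@trq N).
Proof. by case=> [[[i j] k] l]. Qed.

Lemma swap_midK : involutive swap_mid.
Proof. by case=> [[[i j] k] l]. Qed.

Lemma trq_swap_mid t : trq (swap_mid t) = swap_mid (trq t).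
Proof. by case: t => [[[i j] k] l]. Qed.

Lemma rep_cases t : rep t = t \/ rep t = trq t.
Proof. by rewrite /rep; case: ifP; [left | right]. Qed.

Lemma rep_trq t : rep (trq t) = rep t.
Proof.
rewrite /rep trqK; case: (leqP (enum_rank t) (enum_rank (trq t))) => [le_t|/ltnW->//].
case: ifP => // ge_t.
suff E : enum_rank (trq t) = enum_rank t by rewrite (enum_rank_inj E).
by apply/val_inj/eqP; rewrite /= eqn_leq le_t ge_t.
Qed.

Lemma rep_idem t : rep (rep t) = rep t.
Proof. by case: (rep_cases t) => E; rewrite {1}E ?rep_trq. Qed.

Lemma rep_swap_mid_rep t : rep (swap_mid (rep t)) = rep (swap_mid t).
Proof. by case: (rep_cases t) => ->; rewrite -?trq_swap_mid ?rep_trq. Qed.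

Lemma mem_reps r : (r \in reps N) = (rep r == r).
Proof. by rewrite /reps mem_filter mem_enum andbT. Qed.

Lemma uniq_reps : uniq (reps N).
Proof. by rewrite /reps filter_uniq // enum_uniq. Qed.

Lemma rep_eqE t r : rep r = r -> (rep t == r) = (t == r) || (trq t == r).
Proof.
move=> rep_r; apply/eqP/orP => [<-|[]/eqP E]; last by rewrite -rep_r -E rep_trq.
  by case: (rep_cases t) => ->; [left | right].
by rewrite -E in rep_r *.
Qed.

Lemma orbit_size_rep t : orbit_size (rep t) = orbit_size t.
Proof.
by rewrite /orbit_size; case: (rep_cases t) => -> //; rewrite trqK eq_sym.
Qed.

Lemma partner_reps r : partner r \in reps N.
Proof. by rewrite mem_reps /partner rep_idem. Qed.

Lemma partner_involutive : {in reps N, involutive partner}.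
Proof. by move=> r; rewrite mem_reps /partner rep_swap_mid_rep swap_midK => /eqP. Qed.

Lemma orbit_size_partner r : orbit_size (partner r) = orbit_size r.
Proof.
rewrite /partner orbit_size_rep /orbit_size trq_swap_mid.
by rewrite (inj_eq (can_inj swap_midK)).
Qed.

Lemma partner_fixedE r : r \in reps N -> (partner r == r) = diag_pair r.
Proof.
rewrite mem_reps => /eqP rep_r; rewrite /partner rep_eqE // trq_swap_mid.
case: r {rep_r} => [[[i j] k] l]; rewrite /= !xpair_eqE !eqxx !andbT.
by rewrite (eq_sym k j) (eq_sym l i); case: (j == k); case: (i == l).
Qed.

Lemma sum_rep (V : nmodType) (F : idx N -> V) :
  \sum_t F (rep t) = \sum_(r <- reps N) F r *+ orbit_size r.
Proof.
rewrite /reps big_filter big_enum_cond /= (bigID (fun t => rep t == t)) /=.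
under [RHS]eq_bigr do rewrite mulrS.
rewrite big_split /=; congr (_ + _); first by apply: eq_bigr => t /eqP ->.
rewrite [LHS](reindex_inj (can_inj trqK)) /= big_mkcond [RHS]big_mkcond /=.
apply: eq_bigr => t _; rewrite rep_trq.
case: (rep_cases t) => ->; rewrite eqxx /= ?(eq_sym t).
  by case: (trq t == t); rewrite ?mulr0n ?mulr1n.
by case: (trq t == t); rewrite ?mulr0n.
Qed.

Lemma big_idx4 (V : Type) (z : V) (op : Monoid.com_law z) (f : idx N -> V) :
  \big[op/z]_(i < N) \big[op/z]_(j < N) \big[op/z]_(k < N) \big[op/z]_(l < N)
     f (i, j, k, l) = \big[op/z]_(t : idx N) f t.
Proof.
rewrite pair_big /= pair_big /= pair_big /=.
by apply: eq_bigr => [[[[i j] k] l]].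
Qed.

Lemma card_trq_invariant (P : pred (idx N)) : (forall t, P (trq t) = P t) ->
  (#|P| + count (predI P trq_fixed) (reps N) =
   2 * count P (reps N))%N.
Proof.
move=> P_trq; have -> : #|P| = \sum_(r <- reps N) (P r : nat) *+ orbit_size r.
  rewrite -sum_rep -sum1_card big_mkcond /=; apply: eq_bigr => t _.
  by case: (rep_cases t) => ->; rewrite ?P_trq.
elim: (reps N) => [|r s IH]; first by rewrite big_nil.
move: IH; rewrite big_cons /= {2}/orbit_size /trq_fixed.
by case: (P r); case: (trq r == r) => /=; lia.
Qed.

Lemma sum_ord_eq (i : 'I_N) : (\sum_(l < N) (l == i) = 1)%N.
Proof. by rewrite (bigD1 i) //= eqxx big1 // => l /negbTE ->. Qed.

Lemma card_idx : #|idx N| = (N ^ 4)%N.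
Proof. by rewrite /idx !card_prod !card_ord !expnS expn0 muln1 !mulnA. Qed.

Lemma card_idx_sum (P : pred (idx N)) : #|P| = (\sum_t P t)%N.
Proof.
rewrite -sum1_card big_mkcond; apply: eq_bigr => t _.
by rewrite unfold_in; case: (P t).
Qed.

Lemma card_trq_fixed : #|trq_fixed| = (N ^ 2)%N.
Proof.
rewrite card_idx_sum -big_idx4.
transitivity (\sum_(i < N) \sum_(j < N) \sum_(k < N) \sum_(l < N)
                ((l == i) * (k == j)))%N.
  apply: eq_bigr => i _; apply: eq_bigr => j _; apply: eq_bigr => k _.
  apply: eq_bigr => l _; rewrite /trq_fixed /= !xpair_eqE (eq_sym j k) (eq_sym i l).
  by case: (l == i); case: (k == j).
under eq_bigr do under eq_bigr do under eq_bigr do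
  rewrite -big_distrl /= sum_ord_eq mul1n.
under eq_bigr do under eq_bigr do rewrite sum_ord_eq.
under eq_bigr do rewrite sum_nat_const card_ord muln1.
by rewrite sum_nat_const card_ord mulnn.
Qed.

Lemma card_diag_pair : (#|diag_pair| + N ^ 2 = 2 * N ^ 3)%N.
Proof.
rewrite -card_trq_fixed !card_idx_sum -big_split /= -big_idx4.
transitivity (\sum_(i < N) \sum_(j < N) \sum_(k < N) \sum_(l < N)
                ((k == j) + (l == i)))%N.
  apply: eq_bigr => i _; apply: eq_bigr => j _; apply: eq_bigr => k _.
  apply: eq_bigr => l _; rewrite /trq_fixed /= !xpair_eqE (eq_sym j k) (eq_sym i l).
  by case: (l == i); case: (k == j).
under eq_bigr do under eq_bigr do under eq_bigr do
  rewrite big_split /= sum_nat_const card_ord sum_ord_eq.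
under eq_bigr do under eq_bigr do
  rewrite big_split /= -big_distrr /= sum_ord_eq sum_nat_const card_ord.
under eq_bigr do rewrite sum_nat_const card_ord.
rewrite sum_nat_const card_ord; lia.
Qed.

Lemma S_ST_tensor_of (R : realType) (lam : R) (x : idx N -> R) :
  S_ST lam (tensor_of x) =
  N%:R / 2 * reduced_energy partner (fun r => (orbit_size r)%:R) lam (reps N) x.
Proof.
rewrite /S_ST /tensor_of (big_idx4 _ (fun t => x (rep t) * x (rep t))).
have -> : \sum_(i < N) \sum_(j < N) \sum_(k < N) \sum_(l < N)
            x (rep (i, j, k, l)) * x (rep (i, k, j, l)) =
          \sum_t x (rep t) * x (partner (rep t)).
  rewrite -(big_idx4 _ (fun t => x (rep t) * x (partner (rep t)))).
  do 4 (apply: eq_bigr => ? _); by rewrite /partner rep_swap_mid_rep.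
rewrite (sum_rep (fun r => x r * x r)) (sum_rep (fun r => x r * x (partner r))).
rewrite [X in _ = _ * X](_ : _ = \sum_(r <- reps N) (x r * x r) *+ orbit_size r
    + lam * \sum_(r <- reps N) (x r * x (partner r)) *+ orbit_size r); first ring.
rewrite mulr_sumr -big_split; apply: eq_bigr => r _ /=.
by rewrite partner_reps mulr_natl mulrnAr -mulrnDl expr2 mulrA.
Qed.

Lemma count_trq_fixed_reps : count trq_fixed (reps N) = (N ^ 2)%N.
Proof.
have inv t : trq_fixed (trq t) = trq_fixed t.
  by rewrite /trq_fixed trqK eq_sym.
have := card_trq_invariant inv; rewrite card_trq_fixed.
by rewrite (eq_count (a2 := trq_fixed)) => [|t]; [lia | exact: andbb].
Qed.

Lemma size_reps : (2 * size (reps N) = N ^ 4 + N ^ 2)%N.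
Proof.
have := @card_trq_invariant predT (fun=> erefl).
rewrite (eq_count (a2 := trq_fixed)) // count_predT count_trq_fixed_reps.
by rewrite card_idx; lia.
Qed.

Lemma count_diag_pair_reps : count diag_pair (reps N) = (N ^ 3)%N.
Proof.
have inv t : diag_pair (trq t) = diag_pair t.
  by case: t => [[[i j] k] l]; rewrite /= (eq_sym k j) (eq_sym l i).
have := card_trq_invariant inv; rewrite (eq_count (a2 := trq_fixed)) => [|t].
  rewrite count_trq_fixed_reps => card_eq; apply/eqP.
  by rewrite -(eqn_pmul2l (_ : 0 < 2)%N) // -card_eq -card_diag_pair.
case: t => [[[i j] k] l]; rewrite /trq_fixed /= !xpair_eqE (eq_sym j k) (eq_sym i l).
by case: (k == j); case: (l == i); rewrite ?andbF.
Qed.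

Lemma count_nondiag_pair_reps :
  (2 * count (predC diag_pair) (reps N) + 2 * N ^ 3 = N ^ 4 + N ^ 2)%N.
Proof.
rewrite -size_reps -(count_predC diag_pair) count_diag_pair_reps.
by rewrite mulnDr addnC.
Qed.

Lemma fixed_count_reps : fixed_count partner (reps N) = (N ^ 3)%N.
Proof.
rewrite /fixed_count -count_diag_pair_reps; apply: eq_in_count => r.
exact: partner_fixedE.
Qed.

Lemma pair_exponent_reps (R : realType) :
  pair_exponent R partner (reps N) =
  (count (predC diag_pair) (reps N))%:R / 4 :> R.
Proof.
rewrite /pair_exponent (eq_big_seq (fun r => if ~~ diag_pair r then 4^-1 else 0)).
  by rewrite -big_mkcond sumr_const_seq mulr_natl.
by move=> r r_in; rewrite partner_reps partner_fixedE //; case: (diag_pair r).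
Qed.

Lemma Z_ST_gauss_value (R : realType) (lam : R) : (0 < N)%N -> -1 < lam < 1 ->
  Z_ST N lam =
  (gauss_value partner (fun r => (orbit_size r)%:R) lam (N%:R / 2) (reps N))%:E.
Proof.
move=> N_gt0 lam_bounds; rewrite /Z_ST.
under eq_iter_int => x do rewrite S_ST_tensor_of -[expR _]mul1r.
have size_partner r : (orbit_size (partner r))%:R = (orbit_size r)%:R :> R.
  by rewrite orbit_size_partner.
have size_gt0 r : 0 < (orbit_size r)%:R :> R by rewrite ltr0n.
have kap_gt0 : 0 < N%:R / 2 :> R by rewrite divr_gt0 ?ltr0n.
rewrite iter_int_reduced_energy ?mul1r ?ler01 ?uniq_reps //.
exact: partner_involutive.
Qed.

End SelfTransposeTensor.

Lemma self_transpose_exponents (R : realType) (n m : nat) (lam : R) :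
  -1 < lam < 1 -> (2 * m + 2 * n ^ 3 = n ^ 4 + n ^ 2)%N ->
  (1 + lam) `^ (- ((n ^ 3)%N%:R / 2)) * (1 - lam ^+ 2) `^ (- (m%:R / 4)) =
  (1 + lam) `^ (- (2^-1) * ((n%:R * (n%:R + 1)) / 2) ^+ 2) *
  (1 - lam) `^ (- (2^-1) * ((n%:R * (n%:R - 1)) / 2) ^+ 2).
Proof.
move=> /andP[lam_gt lam_lt] mn_eq.
have m_eq : m%:R = (n%:R ^+ 4 + n%:R ^+ 2) / 2 - n%:R ^+ 3 :> R.
  have : (2 * m + 2 * n ^ 3)%N%:R = (n ^ 4 + n ^ 2)%N%:R :> R by rewrite mn_eq.
  rewrite !natrD !natrM !exprS expr0 !mulr1 => h; lra.
have lamD_gt0 : 0 < 1 + lam by lra.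
have -> : 1 - lam ^+ 2 = (1 + lam) * (1 - lam) by ring.
rewrite natrX m_eq powRM ?ltW ?subr_gt0 // mulrA -powRD ?(gt_eqF lamD_gt0) ?implybT //.
by congr (_ `^ _ * _ `^ _); field.
Qed.

Theorem proposition5p8 (R : realType) (N : nat) (lam : R) :
  (1 <= N)%N -> -1 < lam < 1 ->
  [/\ (0 < @Z_ST R N 0)%E, (@Z_ST R N 0 < +oo)%E &
      Z_ST N lam =
        (@Z_ST R N 0 *
         ((1 + lam) `^ (- (2^-1) * ((N%:R * (N%:R + 1)) / 2) ^+ 2) *
          (1 - lam) `^ (- (2^-1) * ((N%:R * (N%:R - 1)) / 2) ^+ 2))%:E)%E].
Proof.
move=> N_gt0 lam_bounds.
have lam0_bounds : -1 < (0 : R) < 1 by rewrite ltrN10 ltr01.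
rewrite !Z_ST_gauss_value // /gauss_value fixed_count_reps pair_exponent_reps.
set P := \prod_(c <- reps N) _.
have P_gt0 : 0 < P.
  apply: prodr_gt0 => c _; rewrite sqrtr_gt0 divr_gt0 ?pi_gt0 //.
  by rewrite mulr_gt0 ?divr_gt0 ?ltr0n.
rewrite addr0 expr2 mulr0 subr0 !powR1 /= !mulr1; split.
- by rewrite lte_fin.
- exact: ltry.
- by rewrite -EFinM self_transpose_exponents // count_nondiag_pair_reps.
Qed.
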